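(* Let $n\geq 0$ and $k\geq 1$ be integers with $k\not\equiv 1 \pmod 3$. Then $\gcd(B_{k,n},C_{k,n})=1$.
   Context: For an integer $k\geq 1$, the generalized balancing numbers are defined by $B_{k,0}=0$, $B_{k,1}=1$ and $B_{k,n}=3kB_{k,n-1}+(1-k)B_{k,n-2}$ for $n\geq 2$; the generalized balancing-Lucas numbers are defined by $C_{k,0}=1$, $C_{k,1}=3$ and $C_{k,n}=3kC_{k,n-1}+(1-k)C_{k,n-2}$ for $n\geq 2$. *)

From mathcomp Require Import all_boot all_algebra.
Set Implicit Arguments. Unset Strict Implicit. Unset Printing Implicit Defensive.
Import GRing.Theory Num.Theory.
Local Open Scope ring_scope.

Fixpoint gbal_pair (k : nat) (a0 a1 : int) (n : nat) : int * int :=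
  match n with
  | 0%N => (a0, a1)
  | n'.+1 => let p := gbal_pair k a0 a1 n' in
             (p.2, (3 * k%:Z) * p.2 + (1 - k%:Z) * p.1)
  end.

Definition B (k n : nat) : int := (gbal_pair k 0 1 n).1.
Definition C (k n : nat) : int := (gbal_pair k 1 3 n).1.

(* Both sequences satisfy u_(n+2) = 3k u_(n+1) + (1-k) u_n, and
   C_(k,n) = B_(k,n+1) - 3(k-1) B_(k,n), so gcd(B_n, C_n) = gcd(B_n, B_(n+1)).
   Consecutive terms of the recurrence stay coprime as long as B_(n+1) is
   coprime to the coefficient 1 - k.  Modulo k - 1 the recurrence reads
   B_(n+2) = 3 B_(n+1), so B_(n+1) = 3^n (mod k - 1), which is prime to k - 1
   when k is not 1 mod 3. *)

From mathcomp Require Import all_boot all_algebra.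
From mathcomp Require Import ring zify.

Set Implicit Arguments.
Unset Strict Implicit.
Unset Printing Implicit Defensive.
Import GRing.Theory Num.Theory.
Local Open Scope ring_scope.

Section SecondOrderRecurrence.

Variables p q : int.

Definition lrec2 (u : nat -> int) := forall n, u n.+2 = p * u n.+1 + q * u n.

Lemma lrec2_eq (u v : nat -> int) :
  lrec2 u -> lrec2 v -> u 0%N = v 0%N -> u 1%N = v 1%N -> u =1 v.
Proof.
move=> recu recv eq0 eq1 n.
suff [] : u n = v n /\ u n.+1 = v n.+1 by [].
elim: n => [|n [eqn eqn1]] //; split=> //.
by rewrite recu recv eqn eqn1.
Qed.

Lemma lrec2_comb (u : nat -> int) (a b : int) :
  lrec2 u -> lrec2 (fun n => a * u n + b * u n.+1).
Proof. by move=> recu n; rewrite /= !recu; ring. Qed.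

Lemma lrec2_gcd_step (u : nat -> int) n :
  lrec2 u -> coprimez (u n.+1) q -> gcdz (u n.+1) (u n.+2) = gcdz (u n) (u n.+1).
Proof.
by move=> recu cop; rewrite recu gcdzMDl Gauss_gcdzr // gcdzC.
Qed.

Lemma lrec2_coprime (u : nat -> int) :
  lrec2 u -> coprimez (u 0%N) (u 1%N) -> (forall n, coprimez (u n.+1) q) ->
  forall n, coprimez (u n) (u n.+1).
Proof.
move=> recu cop01 copq; elim=> // n IHn.
by rewrite /coprimez lrec2_gcd_step.
Qed.

End SecondOrderRecurrence.

Lemma coprimez_eqmodl {m a b : int} :
  (a = b %[mod m])%Z -> coprimez a m = coprimez b m.
Proof. by move=> eq_ab; rewrite /coprimez -gcdz_modl eq_ab gcdz_modl. Qed.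

Lemma lrec2_gbal_pair (k : nat) (a0 a1 : int) :
  lrec2 (3 * k%:Z) (1 - k%:Z) (fun n => (gbal_pair k a0 a1 n).1).
Proof. by []. Qed.

Lemma lrec2_B (k : nat) : lrec2 (3 * k%:Z) (1 - k%:Z) (B k).
Proof. exact: lrec2_gbal_pair. Qed.

Lemma lrec2_C (k : nat) : lrec2 (3 * k%:Z) (1 - k%:Z) (C k).
Proof. exact: lrec2_gbal_pair. Qed.

Lemma B_eqmod_3pow (k n : nat) : (B k n.+1 = 3 ^+ n %[mod k%:Z - 1])%Z.
Proof.
apply/eqP; rewrite eqz_mod_dvd; elim: n => [|n IHn]; first by rewrite subrr dvdz0.
have -> : B k n.+2 - 3 ^+ n.+1 =
          3 * (B k n.+1 - 3 ^+ n) + (k%:Z - 1) * (3 * B k n.+1 - B k n).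
  by rewrite lrec2_B exprS; ring.
by apply: rpredD; [exact: dvdz_mull | exact/dvdz_mulr/dvdzz].
Qed.

Lemma coprimez_3_pred (k : nat) : (k %% 3 != 1)%N -> coprimez 3 (k%:Z - 1).
Proof.
move=> k_mod3; rewrite coprimezE (prime_coprime _ (isT : prime 3)).
apply: contra k_mod3 => /dvdnP [m eq_m]; lia.
Qed.

Lemma coprimez_B_1subk (k n : nat) :
  (k %% 3 != 1)%N -> coprimez (B k n.+1) (1 - k%:Z).
Proof.
move=> k_mod3; rewrite -opprB coprimezN (coprimez_eqmodl (B_eqmod_3pow k n)).
exact/coprimezXl/coprimez_3_pred.
Qed.

Lemma C_B (k n : nat) : C k n = - (3 * (k%:Z - 1)) * B k n + B k n.+1.
Proof.
rewrite -[B k n.+1]mul1r.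
have comb := lrec2_comb (- (3 * (k%:Z - 1))) 1 (lrec2_B k).
by apply: (lrec2_eq (lrec2_C k) comb); rewrite /B /C /=; ring.
Qed.

Theorem mainTheorem13 (k n : nat) :
  (1 <= k)%N -> (k %% 3 != 1)%N -> gcdz (B k n) (C k n) = 1%N.
Proof.
move=> _ k_mod3; rewrite C_B gcdzMDl.
apply/eqP; apply: (lrec2_coprime (lrec2_B k)) => // m.
exact: coprimez_B_1subk.
Qed.
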